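(* Let $t\in\mathbb{R}$, $\mu>0$ and $\sigma>0$. Let $\mathcal{L}(\mu,\sigma)$ be the set of probability distributions $F$ on $\mathbb{R}$ with $\mathbb{E}^F[X]=\mu$ and $\mathbb{E}^F[X^2]=\mu^2+\sigma^2$ (for $X\sim F$), and $\mathcal{L}^+(\mu,\sigma)=\{F\in\mathcal{L}(\mu,\sigma): F(0-)=0\}$. Then \[ \sup_{F \in \mathcal{L}^+(\mu, \sigma)} \mathbb{E}^{F}[(X-t)^2_+] = \sup_{F \in \mathcal{L}(\mu, \sigma)} \mathbb{E}^{F}[(X-t)_{+}^2] = \sigma^2 + (\mu-t)_+^2. \]
   Context: For $x\in\mathbb{R}$, $(x)_+=\max\{x,0\}$. $F(0-)=\mathbb{P}(X<0)$ under $F$. $\mathbb{E}^F$ denotes expectation when $X$ has distribution $F$. *)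

From HB Require Import structures.
From mathcomp Require Import all_boot all_order all_algebra.
From mathcomp Require Import all_classical all_reals all_analysis.
Set Implicit Arguments. Unset Strict Implicit. Unset Printing Implicit Defensive.
Import Order.TTheory GRing.Theory Num.Theory.
Local Open Scope classical_set_scope.
Local Open Scope ring_scope.

Definition pospart {R : realType} (x : R) : R := Num.max x 0.

Definition Lms {R : realType} (mu sigma : R) : set (probability R R) :=
  [set P | P.-integrable setT (fun x : R => x%:E) /\
           (\int[P]_x (x%:E) = mu%:E)%E /\
           (\int[P]_x ((x ^+ 2)%:E) = (mu ^+ 2 + sigma ^+ 2)%:E)%E].

(* L^+(mu, sigma): those with F(0-) = P(X < 0) = 0. *)
Definition Lms_plus {R : realType} (mu sigma : R) : set (probability R R) :=
  [set P | Lms mu sigma P /\ P [set x : R | x < 0] = 0%E].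

Definition stop_loss2 {R : realType} (t : R) (P : probability R R) : \bar R :=
  (\int[P]_x ((pospart (x - t)) ^+ 2)%:E)%E.

From HB Require Import structures.
From mathcomp Require Import all_boot all_order all_algebra.
From mathcomp Require Import all_classical all_reals all_analysis.
From mathcomp Require Import ring lra measurable_realfun.
Import Order.TTheory GRing.Theory Num.Theory.
Local Open Scope classical_set_scope.
Local Open Scope ring_scope.

(* For m = min(t, mu) we have (x - t)_+^2 <= (x - m)^2, and under any F in
   L(mu, sigma) the right-hand side integrates to
   sigma^2 + (mu - m)^2 = sigma^2 + (mu - t)_+^2.  Conversely, for 0 < d <= mu
   the law with atoms mu + sigma^2/d and mu - d, of weights
   d^2/(d^2 + sigma^2) and sigma^2/(d^2 + sigma^2), lies in L^+(mu, sigma).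
   If t < mu and d <= mu - t both atoms lie above t, so the bound is attained;
   if t >= mu the upper atom alone contributes at least
   sigma^2 - d (d + 2 (t - mu)), which tends to sigma^2 as d -> 0. *)

Section two_point.
Context {R : realType} (p : R) (p01 : 0 <= p <= 1) (a b : R).

Let p_ge0 : 0 <= p. Proof. by case/andP: p01. Qed.
Let onem_ge0 : 0 <= 1 - p. Proof. by case/andP: p01 => _; rewrite subr_ge0. Qed.

Definition two_point : set R -> \bar R :=
  measure_add (mscale (NngNum p_ge0) \d_a) (mscale (NngNum onem_ge0) \d_b).

Lemma two_pointE A : two_point A = (p%:E * \d_a A + (1 - p)%:E * \d_b A)%E.
Proof. by rewrite /two_point measure_addE. Qed.

Let two_point_setT : two_point setT = 1%E.
Proof. by rewrite two_pointE !diracT !mule1 -EFinD subrKC. Qed.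

HB.instance Definition _ := Measure.on two_point.
HB.instance Definition _ :=
  Measure_isProbability.Build _ _ _ two_point two_point_setT.

Lemma ge0_integral_two_point (h : R -> R) : measurable_fun setT h ->
  (forall x, 0 <= h x) ->
  (\int[two_point]_x (h x)%:E = (p * h a + (1 - p) * h b)%:E)%E.
Proof.
move=> mh h_ge0.
have mEh : measurable_fun setT (EFin \o h) by exact/measurable_EFinP.
have Eh_ge0 x : setT x -> (0 <= (h x)%:E)%E by rewrite lee_fin.
rewrite ge0_integral_measure_add// !ge0_integral_mscale// !integral_dirac//.
by rewrite !diracT !mul1e.
Qed.

Lemma integral_two_point (h : R -> R) : measurable_fun setT h ->
  (\int[two_point]_x (h x)%:E = (p * h a + (1 - p) * h b)%:E)%E.
Proof.
move=> mh; rewrite integralE.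
have EFin_pos : (EFin \o h)^\+%E = EFin \o h^\+.
  by apply/funext => x; rewrite funeposE /funrpos /= EFin_max.
have EFin_neg : (EFin \o h)^\-%E = EFin \o h^\-.
  by apply/funext => x; rewrite funenegE /funrneg /= EFin_max.
rewrite EFin_pos EFin_neg /=.
have mpos : measurable_fun setT h^\+ by exact: measurable_funrpos.
have mneg : measurable_fun setT h^\- by exact: measurable_funrneg.
have pos_ge0 : forall x, 0 <= h^\+ x by exact: funrpos_ge0.
have neg_ge0 : forall x, 0 <= h^\- x by exact: funrneg_ge0.
rewrite !ge0_integral_two_point//.
have hE x : h x = h^\+ x - h^\- x by rewrite -[in LHS](funrposBneg h).
by rewrite -EFinB (hE a) (hE b); congr EFin; ring.
Qed.

End two_point.
Arguments two_point {R p}.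

Lemma ger0_pospart {R : realType} {x : R} : 0 <= x -> pospart x = x.
Proof. exact: max_l. Qed.

Lemma ler0_pospart {R : realType} {x : R} : x <= 0 -> pospart x = 0.
Proof. exact: max_r. Qed.

Lemma subr_min_pospart {R : realType} (t x : R) :
  x - Num.min t x = pospart (x - t).
Proof. by rewrite oppr_min addr_maxr subrr. Qed.

Lemma sqr_pospart_le {R : realType} (x m t : R) : m <= t ->
  pospart (x - t) ^+ 2 <= (x - m) ^+ 2.
Proof.
move=> m_le_t; have [xt|xt] := leP (x - t) 0.
  by rewrite ler0_pospart// expr0n sqr_ge0.
by rewrite (ger0_pospart (ltW xt)); nra.
Qed.

Lemma sqr_pospart_ge {R : realType} (u c : R) : 0 <= u -> 0 <= c ->
  u ^+ 2 - 2 * u * c <= pospart (u - c) ^+ 2.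
Proof.
move=> u_ge0 c_ge0; have [uc|uc] := leP (u - c) 0.
  by rewrite ler0_pospart// expr0n /=; nra.
by rewrite (ger0_pospart (ltW uc)); nra.
Qed.

Lemma measurable_sqr_pospart {R : realType} (t : R) :
  measurable_fun setT (fun x : R => pospart (x - t) ^+ 2).
Proof.
by apply/measurable_funX/measurable_maxr => //; exact: measurable_funB.
Qed.

Section moments.
Context {R : realType} {mu sigma : R} {P : probability R R}.
Hypothesis LP : Lms mu sigma P.

Lemma Lms_integrable_sqr : P.-integrable setT (fun x => (x ^+ 2)%:E).
Proof.
case: LP => _ [_ EX2]; apply/integrableP; split.
  by apply/measurable_EFinP; exact: measurable_funX.
under eq_integral => x _ do rewrite gee0_abs ?lee_fin ?sqr_ge0//.
by rewrite EX2 ltry.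
Qed.

Lemma Lms_integral_sqr_sub (m : R) :
  (\int[P]_x ((x - m) ^+ 2)%:E = (sigma ^+ 2 + (mu - m) ^+ 2)%:E)%E.
Proof.
case: LP => iX [EX EX2].
have iZ : P.-integrable setT (fun x : R => ((- (2 * m))%:E * x%:E)%E).
  exact: integrableZl.
have icst : P.-integrable setT (fun _ : R => (m ^+ 2)%:E).
  exact: finite_measure_integrable_cst.
rewrite (eq_integral
    (fun x : R => (x ^+ 2)%:E + ((- (2 * m))%:E * x%:E + (m ^+ 2)%:E))%E);
  last by move=> x _; rewrite -EFinM -!EFinD; congr EFin; ring.
rewrite integralD//; last 2 first.
- exact: Lms_integrable_sqr.
- exact: integrableD.
rewrite integralD// integralZl// integral_cst//.
rewrite (_ : ((m ^+ 2)%:E * P _)%E = (m ^+ 2)%:E);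
  last by rewrite probability_setT mule1.
by rewrite EX EX2 -EFinM -!EFinD; congr EFin; ring.
Qed.

Lemma Lms_stop_loss2_le (t : R) :
  (stop_loss2 t P <= (sigma ^+ 2 + pospart (mu - t) ^+ 2)%:E)%E.
Proof.
rewrite -subr_min_pospart -Lms_integral_sqr_sub.
apply: ge0_le_integral => //.
- by move=> x _; rewrite lee_fin sqr_ge0.
- by apply/measurable_EFinP; exact: measurable_sqr_pospart.
- by apply/measurable_EFinP/measurable_funX; exact: measurable_funB.
- by move=> x _; rewrite lee_fin sqr_pospart_le// ge_min lexx.
Qed.

End moments.

Section moment_two_point.
Context {R : realType} (mu : R) {sigma d : R}.
Hypotheses (sigma_gt0 : 0 < sigma) (d_gt0 : 0 < d).

Let d_ge0 : 0 <= d. Proof. exact: ltW. Qed.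
Let d_neq0 : d != 0. Proof. by rewrite gt_eqF. Qed.
Let d2s_gt0 : 0 < d ^+ 2 + sigma ^+ 2. Proof. by rewrite addr_gt0 ?exprn_gt0. Qed.
Let d2s_neq0 : d ^+ 2 + sigma ^+ 2 != 0. Proof. by rewrite gt_eqF. Qed.
Let s_div_d_ge0 : 0 <= sigma ^+ 2 / d. Proof. by rewrite divr_ge0 ?sqr_ge0. Qed.

Definition moment_weight : R := d ^+ 2 / (d ^+ 2 + sigma ^+ 2).

Lemma moment_weight01 : 0 <= moment_weight <= 1.
Proof.
apply/andP; split; first by rewrite divr_ge0 ?sqr_ge0 ?(ltW d2s_gt0).
by rewrite ler_pdivrMr// mul1r lerDl sqr_ge0.
Qed.

Definition moment_two_point : probability R R :=
  two_point moment_weight01 (mu + sigma ^+ 2 / d) (mu - d).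

Lemma moment_two_point_Lms : Lms mu sigma moment_two_point.
Proof.
split; [|split].
- apply/integrableP; split; first exact/measurable_EFinP.
  under eq_integral do rewrite abse_EFin.
  by rewrite (@ge0_integral_two_point _ _ _ _ _ (fun x => `|x|)) ?ltry.
- rewrite (@integral_two_point _ _ _ _ _ id)//; congr EFin.
  by rewrite /moment_weight; field; rewrite d2s_neq0 d_neq0.
- rewrite (@integral_two_point _ _ _ _ _ (fun x => x ^+ 2));
    last exact: measurable_funX.
  by congr EFin; rewrite /moment_weight; field; rewrite d2s_neq0 d_neq0.
Qed.

Lemma moment_two_point_Lms_plus : d <= mu -> Lms_plus mu sigma moment_two_point.
Proof.
move=> d_le_mu; split; first exact: moment_two_point_Lms.
have a_ge0 : 0 <= mu - d by rewrite subr_ge0.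
have b_ge0 : 0 <= mu + sigma ^+ 2 / d by rewrite addr_ge0// (le_trans d_ge0).
apply: (eq_trans (two_pointE _ _ _ _ _)).
by rewrite !diracE !memNset ?mule0 ?adde0//=; apply/negP; rewrite -leNgt.
Qed.

Lemma stop_loss2_moment_two_point_eq (t : R) : d <= mu - t ->
  stop_loss2 t moment_two_point = (sigma ^+ 2 + (mu - t) ^+ 2)%:E.
Proof.
move=> d_le; rewrite -(Lms_integral_sqr_sub moment_two_point_Lms).
rewrite /stop_loss2 !integral_two_point; last 2 first.
- by apply: measurable_funX; exact: measurable_funB.
- exact: measurable_sqr_pospart.
have a_ge0 : 0 <= mu - d - t by rewrite subr_ge0 lerBrDl -lerBrDr.
have b_ge0 : 0 <= mu + sigma ^+ 2 / d - t.
  by rewrite addrAC addr_ge0// (le_trans d_ge0).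
by rewrite !ger0_pospart.
Qed.

Lemma stop_loss2_moment_two_point_ge (t : R) : mu <= t ->
  ((sigma ^+ 2 - d * (d + 2 * (t - mu)))%:E <= stop_loss2 t moment_two_point)%E.
Proof.
move=> mu_le_t; rewrite /stop_loss2 integral_two_point ?lee_fin; last first.
  exact: measurable_sqr_pospart.
have [w_ge0 w_le1] := andP moment_weight01.
set w := moment_weight; set u := sigma ^+ 2 / d; set c := t - mu.
have c_ge0 : 0 <= c by rewrite subr_ge0.
have weighted : w * (u ^+ 2 - 2 * u * c) = sigma ^+ 2 - (1 - w) * (d * (d + 2 * c)).
  by rewrite /w /u /moment_weight; field; rewrite d2s_neq0 d_neq0.
have upper_atom : w * (u ^+ 2 - 2 * u * c) <= w * pospart (mu + u - t) ^+ 2.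
  rewrite ler_wpM2l// (_ : mu + u - t = u - c); last by rewrite /c; ring.
  exact: sqr_pospart_ge.
have lower_atom : 0 <= (1 - w) * pospart (mu - d - t) ^+ 2.
  by rewrite mulr_ge0 ?sqr_ge0 ?subr_ge0.
have w_dc_ge0 : 0 <= w * (d * (d + 2 * c)).
  by rewrite mulr_ge0// mulr_ge0 ?addr_ge0 ?mulr_ge0.
lra.
Qed.

End moment_two_point.

Lemma stop_loss2_approx_bound {R : realType} (t : R) {mu sigma e : R} :
  0 < mu -> 0 < sigma -> 0 < e ->
  exists2 P, Lms_plus mu sigma P &
    ((sigma ^+ 2 + pospart (mu - t) ^+ 2)%:E - e%:E <= stop_loss2 t P)%E.
Proof.
move=> mu_gt0 sigma_gt0 e_gt0.
have [t_lt_mu|mu_le_t] := ltP t mu.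
  pose d := Num.min mu (mu - t).
  have d_gt0 : 0 < d by rewrite lt_min mu_gt0 subr_gt0.
  exists (moment_two_point mu sigma_gt0 d_gt0).
    by apply: moment_two_point_Lms_plus; rewrite ge_min lexx.
  rewrite stop_loss2_moment_two_point_eq ?ge_min ?lexx ?orbT//.
  by rewrite ger0_pospart ?subr_ge0 ?(ltW t_lt_mu)// -EFinB lee_fin gerBl ltW.
pose c := t - mu.
have c_ge0 : 0 <= c by rewrite subr_ge0.
have muc_gt0 : 0 < mu + 2 * c by rewrite ltr_wpDr ?mulr_ge0.
pose d := Num.min mu (e / (mu + 2 * c)).
have d_gt0 : 0 < d by rewrite lt_min mu_gt0 divr_gt0.
exists (moment_two_point mu sigma_gt0 d_gt0).
  by apply: moment_two_point_Lms_plus; rewrite ge_min lexx.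
apply: le_trans (stop_loss2_moment_two_point_ge _ _ _ _ mu_le_t).
rewrite ler0_pospart ?subr_le0// expr0n /= addr0 -EFinB lee_fin -/c.
have : d * (mu + 2 * c) <= e by rewrite -ler_pdivlMr// ge_min lexx orbT.
have : d * (d + 2 * c) <= d * (mu + 2 * c).
  by rewrite ler_wpM2l ?(ltW d_gt0)// lerD2r ge_min lexx.
lra.
Qed.

Theorem corollary2 (R : realType) (t mu sigma : R) (hmu : 0 < mu) (hsigma : 0 < sigma) :
  ereal_sup [set stop_loss2 t P | P in Lms_plus mu sigma] =
    ereal_sup [set stop_loss2 t P | P in Lms mu sigma] /\
  ereal_sup [set stop_loss2 t P | P in Lms mu sigma] =
    (sigma ^+ 2 + (pospart (mu - t)) ^+ 2)%:E.
Proof.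
set bound := (sigma ^+ 2 + pospart (mu - t) ^+ 2)%:E.
have plus_le : (ereal_sup [set stop_loss2 t P | P in Lms_plus mu sigma] <=
    ereal_sup [set stop_loss2 t P | P in Lms mu sigma])%E.
  by apply: ereal_sup_le => _ [P [LP _] <-]; exists P.
have le_bound : (ereal_sup [set stop_loss2 t P | P in Lms mu sigma] <= bound)%E.
  by apply: ge_ereal_sup => _ [P LP <-]; exact: Lms_stop_loss2_le.
have bound_le : (bound <= ereal_sup [set stop_loss2 t P | P in Lms_plus mu sigma])%E.
  apply/lee_subgt0Pr => e e_gt0.
  have [P LP le_P] := stop_loss2_approx_bound t hmu hsigma e_gt0.
  by apply: le_ereal_sup_tmp; exists (stop_loss2 t P) => //; exists P.
have sup_eq : ereal_sup [set stop_loss2 t P | P in Lms mu sigma] = bound.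
  by apply/eqP; rewrite eq_le le_bound (le_trans bound_le plus_le).
split=> //; rewrite sup_eq; apply/eqP; rewrite eq_le bound_le andbT -sup_eq.
exact: plus_le.
Qed.
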